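(* Let $k$ be a field, $(C,\Delta)$ a coassociative coalgebra over $k$, and $(L,\phi,\mu)$ a Poisson algebra over $k$: $\phi(a,b)=[a,b]$ is a Lie bracket, $\mu(a,b)=ab$ is an associative commutative product, and $[a,bc]=c[a,b]+b[a,c]$. Let $\Phi,M:Hom(C,L)\otimes Hom(C,L)\to Hom(C,L)$ be the induced maps, $\Phi(f\otimes g)(c)=\sum[f(c_{(1)}),g(c_{(2)})]$, $M(f\otimes g)(c)=\sum f(c_{(1)})g(c_{(2)})$. Then $(Hom(C,L),\Phi,M)$ is a TD Poisson algebra, namely: (i) $\Phi\circ\tau=-\Phi^\tau$ and $\sum\big([g_1(c_{(1)}),[g_2(c_{(2)}),g_3(c_{(3)})]]+[g_2(c_{(2)}),[g_3(c_{(3)}),g_1(c_{(1)})]]+[g_3(c_{(3)}),[g_1(c_{(1)}),g_2(c_{(2)})]]\big)=0$ for all $g_i\in Hom(C,L)$, $c\in C$; (ii) $M\circ\tau=M^{\tau}$, i.e. $M(g\otimes f)(c)=\sum f(c_{(2)})g(c_{(1)})$; (iii) $\Phi\circ(1\otimes M)=(M\circ(1\otimes\Phi))^{\rho}\circ\rho+(M\circ(1\otimes\Phi))^{\tau_{12}}\circ\tau_{12}$, where $\rho\in S_3$ acts by $x_1\otimes x_2\otimes x_3\mapsto x_3\otimes x_1\otimes x_2$ and $\tau_{12}$ by $x_1\otimes x_2\otimes x_3\mapsto x_2\otimes x_1\otimes x_3$; explicitly, for all $f,g,h\in Hom(C,L)$, $c\in C$, $$\sum[f(c_{(1)}),g(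c_{(2)})h(c_{(3)})]=\sum\Big(h(c_{(3)})[f(c_{(1)}),g(c_{(2)})]+g(c_{(2)})[f(c_{(1)}),h(c_{(3)})]\Big).$$
   Context: Sweedler notation: $\Delta(c)=\sum c_{(1)}\otimes c_{(2)}$, $((\Delta\otimes1)\circ\Delta)(c)=\sum c_{(1)}\otimes c_{(2)}\otimes c_{(3)}$. $S_n$ acts on $n$-fold tensor products by $\sigma(x_1\otimes\dots\otimes x_n)=x_{\sigma(1)}\otimes\dots\otimes x_{\sigma(n)}$; $\tau$ is the transposition in $S_2$. For a map $\Theta$ induced by $\theta:L^{\otimes n}\to L$ (i.e. $\Theta(f_1\otimes\dots\otimes f_n)=\theta\circ(f_1\otimes\dots\otimes f_n)\circ\Delta^{(n-1)}$, $\Delta^{(n-1)}$ the iterated coproduct) and $\sigma\in S_n$, $\Theta^\sigma(f_1\otimes\dots\otimes f_n)=\theta\circ(f_1\otimes\dots\otimes f_n)\circ\sigma\circ\Delta^{(n-1)}$; $M\circ(1\otimes\Phi)$ is the map induced by $\mu\circ(1\otimes\phi)$. *)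

From HB Require Import structures.
From mathcomp Require Import all_boot all_order all_algebra.
Set Implicit Arguments. Unset Strict Implicit. Unset Printing Implicit Defensive.
Import GRing.Theory.
Local Open Scope ring_scope.

Section Defs.
Variable k : fieldType.

Definition bilin (U V : lmodType k) (B : U -> U -> V) : Prop :=
  (forall a (x : k) u v, B a (x *: u + v) = x *: B a u + B a v) /\
  (forall b (x : k) u v, B (x *: u + v) b = x *: B u b + B v b).

Definition trilin (U V : lmodType k) (T : U -> U -> U -> V) : Prop :=
  (forall b c (x : k) u v, T (x *: u + v) b c = x *: T u b c + T v b c) /\
  (forall a c (x : k) u v, T a (x *: u + v) c = x *: T a u c + T a v c) /\
  (forall a b (x : k) u v, T a b (x *: u + v) = x *: T a b u + T a b v).

(* A coproduct is represented by a choice of Sweedler representative: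
   Delta c : seq (C * C) stands for the tensor  \sum_(p <- Delta c) p.1 (x) p.2.
   Tensors are only ever used through bilinear/trilinear maps (universal
   property), so all conditions below are representative-independent. *)

Definition sw2 (C V : lmodType k) (Delta : C -> seq (C * C))
    (B : C -> C -> V) (c : C) : V :=
  \sum_(p <- Delta c) B p.1 p.2.

(* \sum T(c_(1), c_(2), c_(3)), computed as ((Delta (x) 1) o Delta)(c) *)
Definition sw3 (C V : lmodType k) (Delta : C -> seq (C * C))
    (T : C -> C -> C -> V) (c : C) : V :=
  \sum_(p <- Delta c) \sum_(q <- Delta p.1) T q.1 q.2 p.2.

Definition sw3' (C V : lmodType k) (Delta : C -> seq (C * C))
    (T : C -> C -> C -> V) (c : C) : V :=
  \sum_(p <- Delta c) \sum_(q <- Delta p.2) T p.1 q.1 q.2.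

Definition coassoc_coalgebra (C : lmodType k) (Delta : C -> seq (C * C)) : Prop :=
  (forall (V : lmodType k) (B : C -> C -> V), bilin B ->
     forall (x : k) u v, sw2 Delta B (x *: u + v) = x *: sw2 Delta B u + sw2 Delta B v) /\
  (forall (V : lmodType k) (T : C -> C -> C -> V), trilin T ->
     forall c, sw3 Delta T c = sw3' Delta T c).

Definition poisson_algebra (L : lmodType k) (phi mu : L -> L -> L) : Prop :=
  bilin phi /\ bilin mu /\
      (forall a, phi a a = 0) /\
      (forall a b c, phi a (phi b c) + phi b (phi c a) + phi c (phi a b) = 0) /\
      (forall a b c, mu (mu a b) c = mu a (mu b c)) /\
      (forall a b, mu a b = mu b a) /\
      (forall a b c, phi a (mu b c) = mu c (phi a b) + mu b (phi a c)).

End Defs.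

From HB Require Import structures.
From mathcomp Require Import all_boot all_order all_algebra.
Set Implicit Arguments. Unset Strict Implicit. Unset Printing Implicit Defensive.
Import GRing.Theory.
Local Open Scope ring_scope.

(* Each identity already holds for the summand of every Sweedler term, by
   antisymmetry of the bracket, Jacobi, commutativity of the product and the
   Leibniz rule of L respectively. *)

Section Bilinear.
Variables (k : fieldType) (U V : lmodType k) (B : U -> U -> V).
Hypothesis B_bilin : bilin B.

Lemma bilin_addr a u v : B a (u + v) = B a u + B a v.
Proof. by have := B_bilin.1 a 1 u v; rewrite !scale1r. Qed.

Lemma bilin_addl b u v : B (u + v) b = B u b + B v b.
Proof. by have := B_bilin.2 b 1 u v; rewrite !scale1r. Qed.

Lemma bilin_alt_anti : (forall a, B a a = 0) -> forall a b, B a b = - B b a.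
Proof.
move=> alt a b; apply/eqP; rewrite -addr_eq0; apply/eqP.
have := alt (a + b).
by rewrite bilin_addl !bilin_addr !alt add0r addr0.
Qed.

End Bilinear.

Section Sweedler.
Variables (k : fieldType) (C V : lmodType k) (Delta : C -> seq (C * C)).

Lemma eq_sw2 (B B' : C -> C -> V) c :
  (forall x y, B x y = B' x y) -> sw2 Delta B c = sw2 Delta B' c.
Proof. by move=> eqB; apply: eq_bigr => p _; apply: eqB. Qed.

Lemma sw2N (B : C -> C -> V) c :
  sw2 Delta (fun x y => - B x y) c = - sw2 Delta B c.
Proof. exact: sumrN. Qed.

Lemma eq_sw3 (T T' : C -> C -> C -> V) c :
  (forall x y z, T x y z = T' x y z) -> sw3 Delta T c = sw3 Delta T' c.
Proof.
by move=> eqT; apply: eq_bigr => p _; apply: eq_bigr => q _; apply: eqT.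
Qed.

Lemma sw3_eq0 (T : C -> C -> C -> V) c :
  (forall x y z, T x y z = 0) -> sw3 Delta T c = 0.
Proof. by move=> T0; rewrite /sw3 big1 // => p _; rewrite big1. Qed.

End Sweedler.

Theorem proposition4 (k : fieldType) (C L : lmodType k)
    (Delta : C -> seq (C * C)) (phi mu : L -> L -> L) :
  coassoc_coalgebra Delta -> poisson_algebra phi mu ->
  forall (f g h g1 g2 g3 : {linear C -> L}) (c : C),
  [/\
   (* (i) Phi o tau = - Phi^tau *)
   sw2 Delta (fun x y => phi (g x) (f y)) c
     = - sw2 Delta (fun x y => phi (f y) (g x)) c,
   (* (i) Jacobi identity *)
   sw3 Delta (fun x1 x2 x3 =>
       phi (g1 x1) (phi (g2 x2) (g3 x3)) + phi (g2 x2) (phi (g3 x3) (g1 x1))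
       + phi (g3 x3) (phi (g1 x1) (g2 x2))) c = 0,
   (* (ii) M o tau = M^tau *)
   sw2 Delta (fun x y => mu (g x) (f y)) c
     = sw2 Delta (fun x y => mu (f y) (g x)) c &
   (* (iii) Leibniz rule *)
   sw3 Delta (fun x1 x2 x3 => phi (f x1) (mu (g x2) (h x3))) c
     = sw3 Delta (fun x1 x2 x3 =>
         mu (h x3) (phi (f x1) (g x2)) + mu (g x2) (phi (f x1) (h x3))) c].
Proof.
move=> _ [phi_bilin [_ [alt [jacobi [_ [muC leibniz]]]]]] f g h g1 g2 g3 c.
have anti := bilin_alt_anti phi_bilin alt.
split.
- by rewrite -sw2N; apply: eq_sw2.
- by apply: sw3_eq0.
- exact: eq_sw2.
- exact: eq_sw3.
Qed.
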